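(* Let $n\ge2$ and let $M\in\mathbb{R}^{n\times n}$ be Metzler, output unstable and nonsingular. Then (a) $S^TM^{-1}e_n\ge0$ and $e_n^TM^{-1}S\ge0$ entrywise, and $e_n^TM^{-1}e_n>0$; (b) for every $b_0\in\mathbb{R}^n_{\ge0}$, $g_0:=-e_n^TM^{-1}b_0\le0$, and $g_n:=-e_n^TM^{-1}e_n<0$.
   Context: $S:=[e_1\ \cdots\ e_{n-1}]\in\mathbb{R}^{n\times(n-1)}$, with $e_i$ the standard basis vectors. Metzler: all off-diagonal entries nonnegative. Hurwitz stable: all eigenvalues have negative real part. A matrix $M\in\mathbb{R}^{n\times n}$ is output unstable if $S^TMS$ is Hurwitz stable and $e_n^TMe_n>0$. *)

From HB Require Import structures.
From mathcomp Require Import all_boot all_order all_algebra.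
From mathcomp Require Import reals.
From mathcomp Require Import complex.
Set Implicit Arguments. Unset Strict Implicit. Unset Printing Implicit Defensive.
Import Order.TTheory GRing.Theory Num.Theory.
Local Open Scope ring_scope.
Local Open Scope complex_scope.

(* Matrices are m.+1 x m.+1, i.e. n = m.+1. *)

Definition metzler (R : realType) (k : nat) (M : 'M[R]_k) : Prop :=
  forall i j : 'I_k, i != j -> 0 <= M i j.

Definition hurwitz (R : realType) (k : nat) (M : 'M[R]_k) : Prop :=
  forall z : R[i], root (char_poly (map_mx (fun x : R => x%:C) M)) z ->
    Re z < 0.

(* S = [e_1 ... e_{n-1}] in R^{n x (n-1)} with n = m.+1. *)
Definition Smx (R : realType) (m : nat) : 'M[R]_(m.+1, m) :=
  \matrix_(i < m.+1, j < m) (i == widen_ord (leqnSn m) j)%:R.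

Definition en (R : realType) (m : nat) : 'cV[R]_m.+1 :=
  \col_(i < m.+1) (i == ord_max)%:R.

Definition output_unstable (R : realType) (m : nat) (M : 'M[R]_m.+1) : Prop :=
  hurwitz ((Smx R m)^T *m M *m Smx R m) /\ 0 < ((en R m)^T *m M *m en R m) 0 0.

Definition nonneg_mx (R : realType) (p q : nat) (A : 'M[R]_(p, q)) : Prop :=
  forall i j, 0 <= A i j.

From HB Require Import structures.
From mathcomp Require Import all_boot all_order all_algebra.
From mathcomp Require Import reals complex polyrcf.
From mathcomp Require Import ring lra.
Set Implicit Arguments. Unset Strict Implicit. Unset Printing Implicit Defensive.
Import Order.TTheory GRing.Theory Num.Theory.
Local Open Scope ring_scope.

(* A Metzler matrix A whose characteristic polynomial has no real root in
   [l, +oo[ has an entrywise nonnegative resolvent (l I - A)^-1.  By induction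
   on the size: split off the first row and column and invert l I - A through
   the Schur complement of its lower right block, which is positive because
   det (l I - A) > 0; the induction hypothesis also controls the lower right
   block, whose characteristic polynomial cannot have a root beyond l either.
   Hurwitz stability of the leading block A = S^T M S gives l = 0, hence
   (-A)^-1 >= 0.  Splitting M M^-1 = M^-1 M = I along the last coordinate then
   expresses the last column and row of M^-1 as (-A)^-1 (S^T M e) y and
   y (e^T M S) (-A)^-1, where the corner y = e^T M^-1 e satisfies
   ((e^T M S) (-A)^-1 (S^T M e) + e^T M e) y = 1, so that y > 0. *)

Local Notation noroot p := (forall x, ~~ root p x).

Lemma horner_char_poly (R : comNzRingType) n (A : 'M[R]_n) x :
  (char_poly A).[x] = \det (x%:M - A).
Proof.
rewrite /char_poly -horner_evalE -det_map_mx /char_poly_mx map_mxB /=.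
congr (\det (_ - _)); apply/matrixP => i j; rewrite !mxE ?horner_evalE.
  by case: (i == j); rewrite /= ?mulr1n ?mulr0n ?hornerX ?hornerC.
by rewrite hornerC.
Qed.

Section RealRoots.
Variable R : rcfType.
Implicit Types (p : {poly R}) (l : R).

Lemma monic_horner_gt0 p l :
  p \is monic -> {in `[l, +oo[, noroot p} -> 0 < p.[l].
Proof.
move=> /monicP p_monic p_noroot.
have := sgp_pinftyP p_noroot; rewrite /sgp_pinfty p_monic sgr1.
by move=> /(_ l); rewrite in_itv /= lexx => /(_ isT) /eqP; rewrite sgr_cp0.
Qed.

Lemma poly_root_ge_max p y : p != 0 -> root p y ->
  exists2 b, y <= b & root p b /\ {in `]b, +oo[, noroot p}.
Proof.
move=> p_neq0 py; set C := cauchy_bound p.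
have yC : y < C.
  by have := root_in_cauchy_bound p_neq0 py; rewrite in_itv => /andP[].
have noroot_above b : b < C -> {in `]b, C[, noroot p} -> {in `]b, +oo[, noroot p}.
  move=> _ nob z; rewrite in_itv /= andbT => bz.
  have [zC|Cz] := ltP z C; first by apply: nob; rewrite in_itv /= bz.
  by apply: ge_cauchy_bound; rewrite // in_itv /= Cz.
case: (prev_rootP p y C) => [p0|b _ pb yb nob|c _ _ noy].
- by rewrite p0 eqxx in p_neq0.
- move: yb; rewrite in_itv /= => /andP[yb bC].
  by exists b; rewrite ?ltW //; split; [exact/rootP|exact: noroot_above].
- by exists y => //; split=> //; apply: noroot_above.
Qed.

Lemma poly_gt0_right p b : 0 < p.[b] -> exists2 z, b < z & 0 < p.[z].
Proof.
move=> pb; have [d d_gt0 near_b] := poly_cont b p pb.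
exists (b + d / 2); first lra.
have : `|b + d / 2 - b| < d by rewrite addrAC subrr add0r ger0_norm; lra.
by move=> /near_b; rewrite ltr_norml => /andP[+ _]; lra.
Qed.

End RealRoots.

Lemma hurwitz_noroot_ge0 (R : realType) n (A : 'M[R]_n) :
  hurwitz A -> {in `[0, +oo[, noroot (char_poly A)}.
Proof.
move=> A_hurwitz x; rewrite in_itv /= andbT => x_ge0; apply/negP => Ax.
have /A_hurwitz : root (char_poly (map_mx (real_complex R) A)) x%:C%C.
  by rewrite -map_char_poly fmorph_root.
have x_real : x%:C%C \is Num.real by rewrite complex_real.
by rewrite (Creal_ReP _ x_real) ltcE /= ltNge x_ge0 andbF.
Qed.

Lemma det_scalar_subr_gt0 (R : rcfType) n (A : 'M[R]_n) l :
  {in `[l, +oo[, noroot (char_poly A)} -> 0 < \det (l%:M - A).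
Proof.
by move=> A_noroot; rewrite -horner_char_poly monic_horner_gt0 ?char_poly_monic.
Qed.

Lemma scalar_mx_subr_block (R : pzRingType) k (A : 'M[R]_(1 + k)) x :
  x%:M - A = block_mx (x - A 0 0)%:M (- ursubmx A) (- dlsubmx A)
                      (x%:M - drsubmx A).
Proof.
rewrite -{1}(submxK A) scalar_mx_block opp_block_mx add_block_mx.
congr block_mx; rewrite ?sub0r //.
rewrite [X in _ - X]mx11_scalar -raddfB /=; congr (_ - _)%:M.
by rewrite !mxE; have -> : lshift k (0 : 'I_1) = 0 by apply/val_inj.
Qed.

Section SchurComplement.
Variables (F : fieldType) (k : nat) (a : F) (u : 'rV[F]_k) (v : 'cV[F]_k).
Variable C : 'M[F]_k.
Hypothesis C_unit : C \in unitmx.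

Definition schur_complement := a - (u *m invmx C *m v) 0 0.
Local Notation s := schur_complement.

Lemma det_block_schur :
  \det (block_mx a%:M (-u) (-v) C : 'M_(1 + k)) = \det C * s.
Proof.
have -> : block_mx a%:M (-u) (-v) C =
    block_mx 1%:M (-(u *m invmx C)) 0 1%:M *m block_mx s%:M 0 (-v) C.
  rewrite mulmx_block !mul1mx !mul0mx ?mulmx0 !add0r ?addr0 mulNmx mulmxN opprK.
  rewrite mulNmx -[u *m invmx C *m C]mulmxA mulVmx // mulmx1.
  by rewrite [u *m _ *m _]mx11_scalar -raddfD /= subrK.
by rewrite det_mulmx det_ublock det_lblock !det1 det_scalar1 !mul1r mulrC.
Qed.

Lemma invmx_block_schur : s != 0 ->
  invmx (block_mx a%:M (-u) (-v) C : 'M_(1 + k)) =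
  block_mx (s^-1)%:M (s^-1 *: (u *m invmx C)) (s^-1 *: (invmx C *m v))
    (invmx C + s^-1 *: (invmx C *m v *m (u *m invmx C))).
Proof.
move=> s_neq0; set X := block_mx _ _ _ _; set Y := block_mx _ _ _ _.
suff YX : Y *m X = 1%:M.
  have [_ X_unit] := mulmx1_unit YX.
  by rewrite -[RHS]mulmx1 -(mulmxV X_unit) mulmxA YX mul1mx.
have uCv : u *m invmx C *m v = (a - s)%:M.
  by rewrite [LHS]mx11_scalar /s; congr _%:M; ring.
rewrite mulmx_block scalar_mx_block; congr block_mx.
- rewrite mul_scalar_mx scale_scalar_mx mulmxN -scalemxAl uCv scale_scalar_mx.
  by rewrite -raddfN -raddfD /=; congr _%:M; field.
- by rewrite mul_scalar_mx -scalemxAl -mulmxA mulVmx // mulmx1 scalerN addNr.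
- rewrite mul_mx_scalar scalerA mulmxN mulmxDl -!scalemxAl.
  rewrite -[invmx C *m v *m (u *m invmx C) *m v](mulmxA (invmx C *m v)).
  rewrite uCv mul_mx_scalar scalerA -{2}[invmx C *m v]scale1r -scalerDl -scalerBl.
  have -> : a / s - (1 + s^-1 * (a - s)) = 0 by field.
  by rewrite scale0r.
- rewrite mulmxN -scalemxAl mulmxDl mulVmx // -scalemxAl -!mulmxA mulVmx //.
  by rewrite mulmx1 addrCA addNr addr0.
Qed.

End SchurComplement.

Section NonnegMatrices.
Variable R : realType.

Lemma nonneg_mxM p q r (A : 'M[R]_(p, q)) (B : 'M[R]_(q, r)) :
  nonneg_mx A -> nonneg_mx B -> nonneg_mx (A *m B).
Proof. by move=> A0 B0 i j; rewrite mxE sumr_ge0 // => k _; rewrite mulr_ge0. Qed.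

Lemma nonneg_mxD p q (A B : 'M[R]_(p, q)) :
  nonneg_mx A -> nonneg_mx B -> nonneg_mx (A + B).
Proof. by move=> A0 B0 i j; rewrite mxE addr_ge0. Qed.

Lemma nonneg_mxZ p q a (A : 'M[R]_(p, q)) :
  0 <= a -> nonneg_mx A -> nonneg_mx (a *: A).
Proof. by move=> a0 A0 i j; rewrite mxE mulr_ge0. Qed.

Lemma nonneg_scalar_mx n a : 0 <= a -> nonneg_mx (a%:M : 'M[R]_n).
Proof. by move=> a0 i j; rewrite mxE mulrn_wge0. Qed.

Lemma nonneg_block_mx p1 p2 q1 q2 (Aul : 'M[R]_(p1, q1)) (Aur : 'M[R]_(p1, q2))
    (Adl : 'M[R]_(p2, q1)) (Adr : 'M[R]_(p2, q2)) :
  nonneg_mx Aul -> nonneg_mx Aur -> nonneg_mx Adl -> nonneg_mx Adr ->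
  nonneg_mx (block_mx Aul Aur Adl Adr).
Proof.
move=> ul0 ur0 dl0 dr0 i j.
rewrite -(splitK i) -(splitK j).
by case: (split i) => i'; case: (split j) => j' /=;
  rewrite ?block_mxEul ?block_mxEur ?block_mxEdl ?block_mxEdr.
Qed.

End NonnegMatrices.

Section MetzlerBlocks.
Variables (R : realType) (k : nat) (A : 'M[R]_(1 + k)).
Hypothesis A_metzler : metzler A.

Lemma metzler_drsubmx : metzler (drsubmx A).
Proof. by move=> i j ij; rewrite !mxE A_metzler // eq_rshift. Qed.

Lemma nonneg_ursubmx : nonneg_mx (ursubmx A).
Proof. by move=> i j; rewrite !mxE A_metzler // eq_lrshift. Qed.

Lemma nonneg_dlsubmx : nonneg_mx (dlsubmx A).
Proof. by move=> i j; rewrite !mxE A_metzler // eq_rlshift. Qed.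

End MetzlerBlocks.

Section MetzlerResolventStep.
Variables (R : realType) (k : nat) (A : 'M[R]_(1 + k)).
Hypothesis A_metzler : metzler A.
Local Notation B := (drsubmx A).
Hypothesis B_resolvent_ge0 : forall z,
  {in `[z, +oo[, noroot (char_poly B)} -> nonneg_mx (invmx (z%:M - B)).

Let schur_at z :=
  schur_complement (z - A 0 0) (ursubmx A) (dlsubmx A) (z%:M - B).

Lemma det_resolvent_schur z : {in `[z, +oo[, noroot (char_poly B)} ->
  \det (z%:M - A) = \det (z%:M - B) * schur_at z.
Proof.
move=> B_noroot; rewrite scalar_mx_subr_block det_block_schur //.
by rewrite unitmxE unitfE gt_eqF // det_scalar_subr_gt0.
Qed.

Lemma schur_at_le z : {in `[z, +oo[, noroot (char_poly B)} ->
  schur_at z <= z - A 0 0.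
Proof.
move=> /B_resolvent_ge0 B_res0; rewrite /schur_at /schur_complement lerBlDr lerDl.
apply: nonneg_mxM; last exact: nonneg_dlsubmx.
by apply: nonneg_mxM; first exact: nonneg_ursubmx.
Qed.

(* The largest real root b of char_poly B would make the polynomial
   char_poly A - char_poly B * ('X - A 0 0) positive at b (where it equals
   char_poly A) but nonpositive on ]b, +oo[ (by the Schur factorization). *)
Lemma char_poly_drsubmx_noroot l : {in `[l, +oo[, noroot (char_poly A)} ->
  {in `[l, +oo[, noroot (char_poly B)}.
Proof.
move=> A_noroot y; rewrite in_itv /= andbT => ly; apply/negP => By.
have [b yb [Bb B_noroot_gt]] :=
  poly_root_ge_max (monic_neq0 (char_poly_monic B)) By.
have lb := le_trans ly yb.
pose q := char_poly A - char_poly B * ('X - (A 0 0)%:P).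
have qb : 0 < q.[b].
  rewrite !hornerE (rootP Bb) mul0r subr0 monic_horner_gt0 ?char_poly_monic //.
  move=> t; rewrite in_itv /= andbT => bt.
  by rewrite A_noroot // in_itv /= (le_trans lb).
have [z bz qz] := poly_gt0_right qb.
have B_noroot_z : {in `[z, +oo[, noroot (char_poly B)}.
  move=> t; rewrite in_itv /= andbT => zt.
  by rewrite B_noroot_gt // in_itv /= (lt_le_trans bz).
move: qz; rewrite !hornerE !horner_char_poly det_resolvent_schur //.
have := schur_at_le B_noroot_z; have := det_scalar_subr_gt0 B_noroot_z; nra.
Qed.

Lemma resolvent_ge0_step l : {in `[l, +oo[, noroot (char_poly A)} ->
  nonneg_mx (invmx (l%:M - A)).
Proof.
move=> A_noroot; have B_noroot := char_poly_drsubmx_noroot A_noroot.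
have B_unit : l%:M - B \in unitmx.
  by rewrite unitmxE unitfE gt_eqF // det_scalar_subr_gt0.
have s_gt0 : 0 < schur_at l.
  have := det_scalar_subr_gt0 A_noroot.
  by rewrite det_resolvent_schur // pmulr_rgt0 // det_scalar_subr_gt0.
have s_inv0 : 0 <= (schur_at l)^-1 by rewrite invr_ge0 ltW.
have B_res0 := B_resolvent_ge0 B_noroot.
have [u0 v0] := (nonneg_ursubmx A_metzler, nonneg_dlsubmx A_metzler).
rewrite scalar_mx_subr_block invmx_block_schur // ?gt_eqF //.
apply: nonneg_block_mx.
- exact: nonneg_scalar_mx.
- by apply: nonneg_mxZ => //; apply: nonneg_mxM.
- by apply: nonneg_mxZ => //; apply: nonneg_mxM.
- apply: nonneg_mxD => //; apply: nonneg_mxZ => //.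
  by apply: nonneg_mxM; apply: nonneg_mxM.
Qed.

End MetzlerResolventStep.

Lemma metzler_resolvent_ge0 (R : realType) n (A : 'M[R]_n) l :
  metzler A -> {in `[l, +oo[, noroot (char_poly A)} ->
  nonneg_mx (invmx (l%:M - A)).
Proof.
elim: n A l => [|k IH] A l A_metzler; first by move=> _ [].
exact: (@resolvent_ge0_step R k A A_metzler
  (fun z => IH _ z (metzler_drsubmx A_metzler))).
Qed.

Section LastCoordinateSplit.
Variables (R : realType) (m : nat).
Local Notation S := (Smx R m).
Local Notation e := (en R m).
Local Notation widen := (widen_ord (leqnSn m)).

Lemma trSmx_mulmxE p (N : 'M[R]_(m.+1, p)) i j : (S^T *m N) i j = N (widen i) j.
Proof.
rewrite mxE (bigD1 (widen i)) //= big1 ?addr0; first by rewrite !mxE eqxx mul1r.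
by move=> l /negbTE li; rewrite !mxE li mul0r.
Qed.

Lemma mulmx_SmxE p (N : 'M[R]_(p, m.+1)) i j : (N *m S) i j = N i (widen j).
Proof.
rewrite mxE (bigD1 (widen j)) //= big1 ?addr0; first by rewrite !mxE eqxx mulr1.
by move=> l /negbTE lj; rewrite !mxE lj mulr0.
Qed.

Lemma tren_mulmxE p (N : 'M[R]_(m.+1, p)) i j : (e^T *m N) i j = N ord_max j.
Proof.
rewrite mxE (bigD1 ord_max) //= big1 ?addr0; first by rewrite !mxE eqxx mul1r.
by move=> l /negbTE l_max; rewrite !mxE l_max mul0r.
Qed.

Lemma mulmx_enE p (N : 'M[R]_(p, m.+1)) i j : (N *m e) i j = N i ord_max.
Proof.
rewrite mxE (bigD1 ord_max) //= big1 ?addr0; first by rewrite !mxE eqxx mulr1.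
by move=> l /negbTE l_max; rewrite !mxE l_max mulr0.
Qed.

Lemma widen_neq_max (i : 'I_m) : (widen i == ord_max) = false.
Proof. by apply/negbTE; rewrite -val_eqE /= ltn_eqF. Qed.

Lemma Smx_en_partition : S *m S^T + e *m e^T = 1%:M.
Proof.
apply/matrixP => i j; rewrite !mxE big_ord1 !mxE.
have [->|i_max] := eqVneq i ord_max.
  rewrite big1 ?add0r ?mul1r 1?eq_sym //.
  by move=> l _; rewrite !mxE eq_sym widen_neq_max mul0r.
have i_lt : (i < m)%N.
  by rewrite -ltnS ltn_neqAle ltn_ord -val_eqE andbT in i_max *.
pose i' := Ordinal i_lt; have wi : widen i' = i by apply/val_inj.
rewrite (bigD1 i') //= big1 ?addr0.
  by rewrite !mxE wi eqxx mul1r mul0r addr0 eq_sym.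
move=> l li'; rewrite !mxE -wi.
suff /negbTE -> : widen i' != widen l by rewrite mul0r.
by apply: contra li' => /eqP/(congr1 val) /= eq_il; apply/eqP/val_inj.
Qed.

Lemma mulmx_split_last p q (X : 'M[R]_(p, m.+1)) (Y : 'M[R]_(m.+1, q)) :
  X *m Y = X *m S *m (S^T *m Y) + X *m e *m (e^T *m Y).
Proof. by rewrite -{1}[Y]mul1mx -Smx_en_partition mulmxDl mulmxDr !mulmxA. Qed.

Lemma trSmx_en : S^T *m e = 0.
Proof. by apply/matrixP => i j; rewrite trSmx_mulmxE !mxE widen_neq_max. Qed.

Lemma tren_Smx : e^T *m S = 0.
Proof. by apply/matrixP => i j; rewrite mulmx_SmxE !mxE widen_neq_max. Qed.

Lemma tren_en : e^T *m e = 1%:M.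
Proof. by apply/matrixP => i j; rewrite tren_mulmxE !mxE !ord1 eqxx. Qed.

End LastCoordinateSplit.

Section OutputUnstable.
Variables (R : realType) (m : nat) (M : 'M[R]_m.+1).
Hypotheses (M_metzler : metzler M) (M_unit : M \in unitmx).
Local Notation S := (Smx R m).
Local Notation e := (en R m).
Local Notation N := (invmx M).
Local Notation A := (S^T *m M *m S).
Hypotheses (A_hurwitz : hurwitz A) (corner_gt0 : 0 < (e^T *m M *m e) 0 0).

Lemma metzler_lead_block : metzler A.
Proof. by move=> i j ij; rewrite mulmx_SmxE trSmx_mulmxE M_metzler. Qed.

Lemma nonneg_last_col_block : nonneg_mx (S^T *m M *m e).
Proof.
by move=> i j; rewrite mulmx_enE trSmx_mulmxE M_metzler // widen_neq_max.
Qed.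

Lemma nonneg_last_row_block : nonneg_mx (e^T *m M *m S).
Proof.
by move=> i j; rewrite mulmx_SmxE tren_mulmxE M_metzler // eq_sym widen_neq_max.
Qed.

Lemma unitmx_opp_lead_block : - A \in unitmx.
Proof.
have -> : - A = 0%:M - A by rewrite raddf0 sub0r.
rewrite unitmxE unitfE gt_eqF // det_scalar_subr_gt0 //.
exact: hurwitz_noroot_ge0.
Qed.

Lemma nonneg_invmx_opp_lead_block : nonneg_mx (invmx (- A)).
Proof.
have -> : - A = 0%:M - A by rewrite raddf0 sub0r.
apply: metzler_resolvent_ge0 metzler_lead_block _.
exact: hurwitz_noroot_ge0.
Qed.

Lemma invmx_col_last :
  S^T *m N *m e = invmx (- A) *m (S^T *m M *m e) *m (e^T *m N *m e).
Proof.
have : S^T *m M *m (N *m e) = 0.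
  by rewrite mulmxA -(mulmxA _ M) mulmxV // mulmx1 trSmx_en.
rewrite mulmx_split_last => split_eq.
rewrite -[S^T *m N *m e](mulKmx unitmx_opp_lead_block).
rewrite -mulmxA -[RHS]mulmxA mulNmx.
congr (_ *m _); apply/esym/eqP; rewrite -addr_eq0 addrC; apply/eqP.
by move: split_eq; rewrite !mulmxA.
Qed.

Lemma invmx_row_last :
  e^T *m N *m S = (e^T *m N *m e) *m (e^T *m M *m S) *m invmx (- A).
Proof.
have : e^T *m N *m (M *m S) = 0.
  by rewrite mulmxA -(mulmxA _ N) mulVmx // mulmx1 tren_Smx.
rewrite mulmx_split_last => split_eq.
rewrite -[e^T *m N *m S](mulmxK unitmx_opp_lead_block) mulmxN.
congr (_ *m _); apply/esym/eqP; rewrite -addr_eq0 addrC; apply/eqP.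
by move: split_eq; rewrite !mulmxA.
Qed.

Lemma invmx_corner_last :
  (e^T *m M *m S *m invmx (- A) *m (S^T *m M *m e) + e^T *m M *m e)
    *m (e^T *m N *m e) = 1%:M.
Proof.
have : e^T *m M *m (N *m e) = 1%:M.
  by rewrite mulmxA -(mulmxA _ M) mulmxV // mulmx1 tren_en.
rewrite mulmx_split_last [S^T *m (N *m e)]mulmxA invmx_col_last => <-.
by rewrite mulmxDl [e^T *m (N *m e)]mulmxA !(mulmxA (e^T *m M *m S)).
Qed.

Lemma invmx_corner_gt0 : 0 < (e^T *m N *m e) 0 0.
Proof.
have := congr1 (fun X : 'M[R]_1 => X 0 0) invmx_corner_last.
rewrite /= mxE big_ord1 mxE [in RHS]mxE /=.
have : 0 <= (e^T *m M *m S *m invmx (- A) *m (S^T *m M *m e)) 0 0.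
  apply: nonneg_mxM; last exact: nonneg_last_col_block.
  apply: nonneg_mxM; last exact: nonneg_invmx_opp_lead_block.
  exact: nonneg_last_row_block.
move: corner_gt0; set g := (_ *m _) 0 0; set d := (_ *m _) 0 0.
set y := (_ *m _) 0 0.
nra.
Qed.

Lemma nonneg_invmx_corner : nonneg_mx (e^T *m N *m e).
Proof. by move=> i j; rewrite !ord1 ltW // invmx_corner_gt0. Qed.

Lemma nonneg_invmx_col_last : nonneg_mx (S^T *m N *m e).
Proof.
rewrite invmx_col_last; apply: nonneg_mxM; last exact: nonneg_invmx_corner.
apply: nonneg_mxM; last exact: nonneg_last_col_block.
exact: nonneg_invmx_opp_lead_block.
Qed.

Lemma nonneg_invmx_row_last : nonneg_mx (e^T *m N *m S).
Proof.
rewrite invmx_row_last.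
apply: nonneg_mxM; last exact: nonneg_invmx_opp_lead_block.
by apply: nonneg_mxM; [exact: nonneg_invmx_corner | exact: nonneg_last_row_block].
Qed.

End OutputUnstable.

Theorem mainTheorem10 (R : realType) (m : nat) (M : 'M[R]_m.+1) :
  (1 <= m)%N ->
  metzler M -> output_unstable M -> M \in unitmx ->
  (nonneg_mx ((Smx R m)^T *m invmx M *m en R m)
   /\ nonneg_mx ((en R m)^T *m invmx M *m Smx R m)
   /\ 0 < ((en R m)^T *m invmx M *m en R m) 0 0)
  /\
  ((forall b0 : 'cV[R]_m.+1, nonneg_mx b0 ->
      - ((en R m)^T *m invmx M *m b0) 0 0 <= 0)
   /\ - ((en R m)^T *m invmx M *m en R m) 0 0 < 0).
Proof.
(* The argument also covers m = 0. *)
move=> _ M_metzler [A_hurwitz corner_gt0] M_unit.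
have y_gt0 := invmx_corner_gt0 M_metzler M_unit A_hurwitz corner_gt0.
split; first split; last split.
- exact: nonneg_invmx_col_last.
- by split=> //; apply: nonneg_invmx_row_last.
- move=> b0 b0_ge0; rewrite oppr_le0 mulmx_split_last.
  apply: nonneg_mxD; apply: nonneg_mxM.
  + exact: nonneg_invmx_row_last.
  + by move=> i j; rewrite trSmx_mulmxE.
  + exact: nonneg_invmx_corner.
  + by move=> i j; rewrite tren_mulmxE.
- by rewrite oppr_lt0.
Qed.
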